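(* In the process algebra $\mathcal{G}$ described in the context, let $P\in\{D,C,C'\}$ and let $Q$ be a process with $P\Longrightarrow P\,\|\,Q$. Then $P\,\|\,Q\Longrightarrow P$.
   Context: Process algebras: a triple $(\mathcal{C},\mathcal{A},\Delta)$ of finitely many constants, actions (including silent $\tau$) and rules $X\stackrel{\ell}{\longrightarrow}P$. Processes: $P::=\epsilon\mid X\mid PP'\mid P\|P'$, sequential composition associative, parallel composition associative and commutative, $\epsilon$ a unit for both. Semantics: rules of $\Delta$; if $P\stackrel{\ell}{\longrightarrow}P'$ then $PQ\stackrel{\ell}{\longrightarrow}P'Q$, $P\|Q\stackrel{\ell}{\longrightarrow}P'\|Q$, $Q\|P\stackrel{\ell}{\longrightarrow}Q\|P'$. $\Longrightarrow$ is the reflexive transitive closure of $\stackrel{\tau}{\longrightarrow}$. The algebra $\mathcal{G}$: fix a finite alphabet $\Sigma$ with $|\Sigma|\ge2$ and a Post Correspondence instance $\mathrm{INST}=\{(u_1,v_1),\dots,(u_n,v_n)\}$ with $u_k,v_k\in\Sigma^{+}$; let $\mathcal{N}=\{1,\dots,n\}$. Actions: $\{\lambda_U,\lambda_V,\lambda_D,\lambda_I,\lambda_S,\lambda_Z\}\cup\mathcal{N}\cup\Sigma\cup\{\tau\}$. Constants: $X,Y,Z,I,S,C,C',D,G,G',G_u,G_v,G_v'$, $U_k,V_k$ ($k\in\mathcal{N}$), and $W(\omega,k),W(\omega,0)$ for $k\in\mathcal{N}$ and $\omega$ a (possibly empty) suffix of $u_k$ or of $v_k$; $\mathcal{W}$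 is the set of these $W$-constants. Rules (with $k$ ranging over $\mathcal{N}$, $a$ over $\Sigma$, $W$ over $\mathcal{W}$): $X\stackrel{\lambda_U}{\longrightarrow}D\|G_v$, $X\stackrel{\tau}{\longrightarrow}D$, $Y\stackrel{\tau}{\longrightarrow}D$, $D\stackrel{\tau}{\longrightarrow}D\|G_u$, $D\stackrel{\lambda_D}{\longrightarrow}C$; $G_u\stackrel{\tau}{\longrightarrow}G_uU_k$, $G_u\stackrel{\lambda_U}{\longrightarrow}G_vU_k$, $G_u\stackrel{\tau}{\longrightarrow}G_v'$, $G_v'\stackrel{\tau}{\longrightarrow}G_v'V_k$, $G_v'\stackrel{\tau}{\longrightarrow}Z$; $G_v\stackrel{\tau}{\longrightarrow}G_vV_k$, $G_v\stackrel{\tau}{\longrightarrow}\epsilon$, $G_v\stackrel{\lambda_V}{\longrightarrow}Z$, $Z\stackrel{\tau}{\longrightarrow}\epsilon$, $Z\stackrel{\lambda_Z}{\longrightarrow}\epsilon$; $C\stackrel{\lambda_I}{\longrightarrow}I$, $C\stackrel{\lambda_S}{\longrightarrow}S$, $C\stackrel{\tau}{\longrightarrow}C\|G$, $C\stackrel{\tau}{\longrightarrow}C\|G_v$; $G\stackrel{\tau}{\longrightarrow}GU_k$, $G\stackrel{\tau}{\longrightarrow}GV_k$, $G\stackrel{\tau}{\longrightarrow}\epsilon$; $I\stackrel{\lambda_I}{\longrightarrow}C'$, $I\stackrel{k}{\longrightarrow}I$, $S\stackrel{\lambda_S}{\longrightarrow}C'$, $S\stackrel{a}{\longrightarrow}S$,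 $C'\stackrel{\tau}{\longrightarrow}C'\|G'$, $C'\stackrel{\tau}{\longrightarrow}\epsilon$; $G'\stackrel{\tau}{\longrightarrow}G'U_k$, $G'\stackrel{\tau}{\longrightarrow}G'V_k$, $G'\stackrel{\tau}{\longrightarrow}G'W$, $G'\stackrel{\tau}{\longrightarrow}G_v$, $G'\stackrel{\tau}{\longrightarrow}Z$; $U_k\stackrel{\tau}{\longrightarrow}W(u_k,k)$, $V_k\stackrel{\tau}{\longrightarrow}W(v_k,k)$; $W(a\omega,k)\stackrel{a}{\longrightarrow}W(\omega,k)$, $W(a\omega,0)\stackrel{a}{\longrightarrow}W(\omega,0)$, $W(\omega,k)\stackrel{k}{\longrightarrow}W(\omega,0)$, $W(a\omega,k)\stackrel{\tau}{\longrightarrow}W(\omega,k)$, $W(a\omega,0)\stackrel{\tau}{\longrightarrow}W(\omega,0)$, $W(\omega,k)\stackrel{\tau}{\longrightarrow}W(\omega,0)$, $W(\epsilon,0)\stackrel{\tau}{\longrightarrow}\epsilon$. *)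

From mathcomp Require Import all_boot.
Set Implicit Arguments. Unset Strict Implicit. Unset Printing Implicit Defensive.

Section G.
Variable Sigma : finType.
(* The PCP instance: the list [(u_1,v_1); ...; (u_n,v_n)]. *)
Variable inst : seq (seq Sigma * seq Sigma).

Definition npairs := size inst.
Definition inN (k : nat) : bool := (1 <= k <= npairs).
Definition uk (k : nat) : seq Sigma := (nth ([::], [::]) inst k.-1).1.
Definition vk (k : nat) : seq Sigma := (nth ([::], [::]) inst k.-1).2.

(* Constants of G.  cW w k is W(w,k); k = 0 encodes W(w,0). *)
Inductive const : Type :=
| cX | cY | cZ | cI | cS | cC | cC' | cD | cG | cG' | cGu | cGv | cGv'
| cU of nat | cV of nat | cW of seq Sigma & nat.

Definition validW (w : seq Sigma) (j : nat) : bool :=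
  ((j == 0) || inN j) &&
  [exists k : 'I_npairs.+1, inN k && (suffix w (uk k) || suffix w (vk k))].

Definition valid_const (c : const) : bool :=
  match c with
  | cU k | cV k => inN k
  | cW w j => validW w j
  | _ => true
  end.

Inductive act : Type :=
| lamU | lamV | lamD | lamI | lamS | lamZ
| aNum of nat
| aSym of Sigma
| tau.

Inductive proc : Type :=
| Eps
| Cst of const
| Seq of proc & proc
| Par of proc & proc.

Fixpoint proc_wf (p : proc) : bool :=
  match p with
  | Eps => true
  | Cst c => valid_const c
  | Seq p q | Par p q => proc_wf p && proc_wf q
  end.

Inductive cong : proc -> proc -> Prop :=
| cong_refl p : cong p p
| cong_sym p q : cong p q -> cong q p
| cong_trans p q r : cong p q -> cong q r -> cong p r
| cong_seq p p' q q' : cong p p' -> cong q q' -> cong (Seq p q) (Seq p' q')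
| cong_par p p' q q' : cong p p' -> cong q q' -> cong (Par p q) (Par p' q')
| cong_seqA p q r : cong (Seq (Seq p q) r) (Seq p (Seq q r))
| cong_parA p q r : cong (Par (Par p q) r) (Par p (Par q r))
| cong_parC p q : cong (Par p q) (Par q p)
| cong_seq0l p : cong (Seq Eps p) p
| cong_seq0r p : cong (Seq p Eps) p
| cong_par0r p : cong (Par p Eps) p.

Inductive rule : const -> act -> proc -> Prop :=
| r_X1 : rule cX lamU (Par (Cst cD) (Cst cGv))
| r_X2 : rule cX tau (Cst cD)
| r_Y : rule cY tau (Cst cD)
| r_D1 : rule cD tau (Par (Cst cD) (Cst cGu))
| r_D2 : rule cD lamD (Cst cC)
| r_Gu1 k : inN k -> rule cGu tau (Seq (Cst cGu) (Cst (cU k)))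
| r_Gu2 k : inN k -> rule cGu lamU (Seq (Cst cGv) (Cst (cU k)))
| r_Gu3 : rule cGu tau (Cst cGv')
| r_Gv'1 k : inN k -> rule cGv' tau (Seq (Cst cGv') (Cst (cV k)))
| r_Gv'2 : rule cGv' tau (Cst cZ)
| r_Gv1 k : inN k -> rule cGv tau (Seq (Cst cGv) (Cst (cV k)))
| r_Gv2 : rule cGv tau Eps
| r_Gv3 : rule cGv lamV (Cst cZ)
| r_Z1 : rule cZ tau Eps
| r_Z2 : rule cZ lamZ Eps
| r_C1 : rule cC lamI (Cst cI)
| r_C2 : rule cC lamS (Cst cS)
| r_C3 : rule cC tau (Par (Cst cC) (Cst cG))
| r_C4 : rule cC tau (Par (Cst cC) (Cst cGv))
| r_G1 k : inN k -> rule cG tau (Seq (Cst cG) (Cst (cU k)))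
| r_G2 k : inN k -> rule cG tau (Seq (Cst cG) (Cst (cV k)))
| r_G3 : rule cG tau Eps
| r_I1 : rule cI lamI (Cst cC')
| r_I2 k : inN k -> rule cI (aNum k) (Cst cI)
| r_S1 : rule cS lamS (Cst cC')
| r_S2 (a : Sigma) : rule cS (aSym a) (Cst cS)
| r_C'1 : rule cC' tau (Par (Cst cC') (Cst cG'))
| r_C'2 : rule cC' tau Eps
| r_G'1 k : inN k -> rule cG' tau (Seq (Cst cG') (Cst (cU k)))
| r_G'2 k : inN k -> rule cG' tau (Seq (Cst cG') (Cst (cV k)))
| r_G'3 w j : validW w j -> rule cG' tau (Seq (Cst cG') (Cst (cW w j)))
| r_G'4 : rule cG' tau (Cst cGv)
| r_G'5 : rule cG' tau (Cst cZ)
| r_U k : inN k -> rule (cU k) tau (Cst (cW (uk k) k))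
| r_V k : inN k -> rule (cV k) tau (Cst (cW (vk k) k))
| r_W1 (a : Sigma) w k : inN k -> validW (a :: w) k ->
    rule (cW (a :: w) k) (aSym a) (Cst (cW w k))
| r_W2 (a : Sigma) w : validW (a :: w) 0 ->
    rule (cW (a :: w) 0) (aSym a) (Cst (cW w 0))
| r_W3 w k : inN k -> validW w k -> rule (cW w k) (aNum k) (Cst (cW w 0))
| r_W4 (a : Sigma) w k : inN k -> validW (a :: w) k ->
    rule (cW (a :: w) k) tau (Cst (cW w k))
| r_W5 (a : Sigma) w : validW (a :: w) 0 ->
    rule (cW (a :: w) 0) tau (Cst (cW w 0))
| r_W6 w k : inN k -> validW w k -> rule (cW w k) tau (Cst (cW w 0))
| r_W7 : validW [::] 0 -> rule (cW [::] 0) tau Eps.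

Inductive step : proc -> act -> proc -> Prop :=
| st_rule c l p : rule c l p -> step (Cst c) l p
| st_seq p l p' q : step p l p' -> step (Seq p q) l (Seq p' q)
| st_parl p l p' q : step p l p' -> step (Par p q) l (Par p' q)
| st_parr p l p' q : step p l p' -> step (Par q p) l (Par q p')
| st_cong p p1 l q1 q : cong p p1 -> step p1 l q1 -> cong q1 q -> step p l q.

Inductive wtau : proc -> proc -> Prop :=
| wt_refl p q : cong p q -> wtau p q
| wt_step p p' q : step p tau p' -> wtau p' q -> wtau p q.

End G.

From mathcomp Require Import all_boot.
Set Implicit Arguments. Unset Strict Implicit. Unset Printing Implicit Defensive.

(* Call the constants Z, G, G', G_u, G_v, G_v' and the valid U_k, V_k, W(w,j)
   disposable: each of them tau-reduces to the empty process, and every rule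
   of a disposable constant yields a process made of disposable constants only.
   The tau-rules of D, C and C' either terminate or spawn a disposable constant
   beside the original one.  Hence along a tau-path from P the process stays
   built from disposable constants and copies of P, and the number of copies
   of P never grows.  If P ==> P || Q, then Q contains no copy of P, so Q is
   disposable and P || Q ==> P || eps = P. *)

Lemma count0_all_predC (T : Type) (a b : pred T) (s : seq T) :
  all a s -> subpred b (predC a) -> count b s = 0.
Proof.
move=> + hba; elim: s => //= x s IH /andP [hx /IH ->]; rewrite addn0.
by case hb: (b x) => //; case/negP: (hba x hb).
Qed.

Lemma all_predU_count0 (T : Type) (a b : pred T) (s : seq T) :
  all (predU a b) s -> count b s = 0 -> all a s.
Proof.
elim: s => //= x s IH /andP [/orP [ha | hb] hs]; last by rewrite hb.
by rewrite ha; case: (b x) => // /(IH hs).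
Qed.

Section Consts.
Variable Sigma : finType.

Fixpoint consts (p : proc Sigma) : seq (const Sigma) :=
  match p with
  | Eps => [::]
  | Cst c => [:: c]
  | Seq p q | Par p q => consts p ++ consts q
  end.

Lemma cong_count_consts (a : pred (const Sigma)) p q :
  cong p q -> count a (consts p) = count a (consts q).
Proof.
elim=> {p q} [p | p q _ -> | p q r _ -> _ ->
             | p p' q q' _ hp _ hq | p p' q q' _ hp _ hq | | | | | |] //;
  rewrite ?count_cat ?hp ?hq //.
all: by move=> *; rewrite !count_cat ?addnA ?cats0 // addnC.
Qed.

Lemma cong_all_consts (a : pred (const Sigma)) p q :
  cong p q -> all a (consts p) = all a (consts q).
Proof. by move=> hpq; rewrite !all_count -!count_predT !(cong_count_consts _ hpq). Qed.

Definition root (c : const Sigma) : bool := if c is (cD | cC | cC') then true else false.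

Definition same_root (r c : const Sigma) : bool :=
  match r, c with
  | cD, cD | cC, cC | cC', cC' => true
  | _, _ => false
  end.

Lemma same_root_root r c : same_root r c -> root c.
Proof. by case: r; case: c. Qed.

End Consts.

Section Disposable.
Variable Sigma : finType.
Variable inst : seq (seq Sigma * seq Sigma).

Lemma wtau_refl p : wtau inst p p.
Proof. exact/wt_refl/cong_refl. Qed.

Lemma wtau_congl p q r : cong p q -> wtau inst q r -> wtau inst p r.
Proof.
move=> hpq hqr; case: hqr hpq => [q' r' hqr | q' q'' r' hs hw] hpq.
  exact/wt_refl/(cong_trans hpq).
exact: wt_step (st_cong hpq hs (cong_refl _)) hw.
Qed.

Lemma wtau_trans p q r : wtau inst p q -> wtau inst q r -> wtau inst p r.
Proof.
elim=> {p q} [p q hpq | p p' q hs _ IH] hqr; first exact: wtau_congl hpq hqr.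
exact: wt_step hs (IH hqr).
Qed.

Lemma wtau_seql p p' q : wtau inst p p' -> wtau inst (Seq p q) (Seq p' q).
Proof.
elim=> {p p'} [p p' hp | p p' r hs _ IH]; last exact: wt_step (st_seq _ hs) IH.
exact/wt_refl/cong_seq/cong_refl.
Qed.

Lemma wtau_parl p p' q : wtau inst p p' -> wtau inst (Par p q) (Par p' q).
Proof.
elim=> {p p'} [p p' hp | p p' r hs _ IH]; last exact: wt_step (st_parl _ hs) IH.
exact/wt_refl/cong_par/cong_refl.
Qed.

Lemma wtau_parr p p' q : wtau inst p p' -> wtau inst (Par q p) (Par q p').
Proof.
elim=> {p p'} [p p' hp | p p' r hs _ IH]; last exact: wt_step (st_parr _ hs) IH.
exact/wt_refl/cong_par/hp/cong_refl.
Qed.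

Lemma validW_uk k : inN inst k -> validW inst (uk inst k) k.
Proof.
move=> hk; have hk' : k < (npairs inst).+1 by rewrite ltnS; case/andP: hk.
by rewrite /validW hk orbT; apply/existsP; exists (Ordinal hk'); rewrite /= hk suffix_refl.
Qed.

Lemma validW_vk k : inN inst k -> validW inst (vk inst k) k.
Proof.
move=> hk; have hk' : k < (npairs inst).+1 by rewrite ltnS; case/andP: hk.
by rewrite /validW hk orbT; apply/existsP; exists (Ordinal hk'); rewrite /= hk suffix_refl orbT.
Qed.

Lemma validW_behead (a : Sigma) w j : validW inst (a :: w) j -> validW inst w j.
Proof.
case/andP=> hj /existsP [k /andP [hk hs]]; rewrite /validW hj; apply/existsP; exists k.
by rewrite hk; case/orP: hs => /(suffix_trans (suffix_cons w a)) ->; rewrite ?orbT.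
Qed.

Lemma validW_0 w j : validW inst w j -> validW inst w 0.
Proof. by case/andP. Qed.

Definition disposable (c : const Sigma) : bool :=
  match c with
  | cZ | cG | cG' | cGu | cGv | cGv' => true
  | cU k | cV k => inN inst k
  | cW w j => validW inst w j
  | _ => false
  end.

Lemma rule_disposable c l p :
  rule inst c l p -> disposable c -> all disposable (consts p).
Proof.
case=> //= *; rewrite ?andbT //.
- exact: validW_uk.
- exact: validW_vk.
all: by [apply: validW_behead; eassumption | apply: validW_0; eassumption].
Qed.

Lemma rule_root c p : rule inst c (tau Sigma) p -> root c ->
  consts p = [::] \/ exists2 g, disposable g & consts p = [:: c; g].
Proof.
move e: (tau Sigma) => l hr; case: hr e => //= *.
all: by [left | right; eexists; last reflexivity].
Qed.

Lemma rule_wtau c p : rule inst c (tau Sigma) p -> wtau inst p (Eps Sigma) ->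
  wtau inst (Cst c) (Eps Sigma).
Proof. by move=> hr; apply/wt_step/st_rule. Qed.

Lemma W0_wtau_eps w : validW inst w 0 -> wtau inst (Cst (cW w 0)) (Eps Sigma).
Proof.
elim: w => [|a w IH] hw; first exact: rule_wtau (r_W7 hw) (wtau_refl _).
exact: rule_wtau (r_W5 hw) (IH (validW_behead hw)).
Qed.

Lemma W_wtau_eps w j : validW inst w j -> wtau inst (Cst (cW w j)) (Eps Sigma).
Proof.
case: j => [|j] hw; first exact: W0_wtau_eps.
have hj : inN inst j.+1 by case/andP: hw.
exact: rule_wtau (r_W6 hj hw) (W0_wtau_eps (validW_0 hw)).
Qed.

Lemma disposable_wtau_eps c : disposable c -> wtau inst (Cst c) (Eps Sigma).
Proof.
have hZ := rule_wtau (r_Z1 inst) (wtau_refl _).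
have hGv' := rule_wtau (r_Gv'2 inst) hZ.
case: c => //= [_ | _ | _ | _ | k hk | k hk | w j]; last exact: W_wtau_eps.
- exact: rule_wtau (r_G3 inst) (wtau_refl _).
- exact: rule_wtau (r_G'5 inst) hZ.
- exact: rule_wtau (r_Gu3 inst) hGv'.
- exact: rule_wtau (r_Gv2 inst) (wtau_refl _).
- exact: rule_wtau (r_U hk) (W_wtau_eps (validW_uk hk)).
- exact: rule_wtau (r_V hk) (W_wtau_eps (validW_vk hk)).
Qed.

Lemma all_disposable_wtau_eps p :
  all disposable (consts p) -> wtau inst p (Eps Sigma).
Proof.
elim: p => [|c|p IHp q IHq|p IHp q IHq] /=; rewrite ?all_cat.
- by move=> _; apply: wtau_refl.
- by rewrite andbT; apply: disposable_wtau_eps.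
- case/andP=> /IHp hp /IHq hq; apply: wtau_trans (wtau_seql q hp) _.
  exact: wtau_congl (cong_seq0l _) hq.
- case/andP=> /IHp hp /IHq hq; apply: wtau_trans (wtau_parl q hp) _.
  exact: wtau_congl (cong_trans (cong_parC _ _) (cong_par0r _)) hq.
Qed.

Section Copies.
Variable r : const Sigma.

Definition admissible (p : proc Sigma) : bool :=
  all (predU disposable (same_root r)) (consts p).

Definition copies (p : proc Sigma) : nat := count (same_root r) (consts p).

Lemma disposable_same_root c : disposable c -> same_root r c = false.
Proof. by case: r; case: c. Qed.

Lemma rule_copies c p : rule inst c (tau Sigma) p ->
  disposable c || same_root r c -> admissible p && (copies p <= same_root r c).
Proof.
move=> hr /orP [hc | hrc].
  have hp := rule_disposable hr hc.
  have -> : copies p = 0.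
    by apply: count0_all_predC hp _ => x hx; apply/negP => /disposable_same_root; rewrite hx.
  by rewrite andbT; apply: sub_all hp => x /= ->.
rewrite /admissible /copies.
case: (rule_root hr (same_root_root hrc)) => [-> | [g hg ->]] //=.
by rewrite hrc hg disposable_same_root ?orbT.
Qed.

Lemma step_copies p l q : step inst p l q -> l = tau Sigma -> admissible p ->
  admissible q && (copies q <= copies p).
Proof.
rewrite /admissible /copies.
elim=> {p l q} /= [c l p hr hl | p l p' q _ IH hl | p l p' q _ IH hl | p l p' q _ IH hl |
                   p p1 l q1 q hp _ IH hq hl].
- by rewrite hl in hr; rewrite andbT addn0; apply: rule_copies.
- rewrite !all_cat !count_cat => /andP [/(IH hl) /andP [-> h] ->].
  by rewrite leq_add2r.
- rewrite !all_cat !count_cat => /andP [/(IH hl) /andP [-> h] ->].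
  by rewrite leq_add2r.
- rewrite !all_cat !count_cat => /andP [-> /(IH hl) /andP [-> h]].
  by rewrite leq_add2l.
- rewrite (cong_all_consts _ hp) -(cong_all_consts _ hq) -(cong_count_consts _ hq).
  by rewrite (cong_count_consts _ hp); apply: IH.
Qed.

Lemma wtau_copies p q : wtau inst p q -> admissible p ->
  admissible q && (copies q <= copies p).
Proof.
elim=> {p q} [p q hpq | p p' q hs _ IH] hp.
  rewrite /admissible /copies -(cong_all_consts _ hpq) -(cong_count_consts _ hpq).
  by rewrite leqnn andbT.
case/andP: (step_copies hs erefl hp) => /IH /andP [-> hq] hp'.
exact: leq_trans hq hp'.
Qed.

End Copies.

End Disposable.

Theorem lemma4 (Sigma : finType) (inst : seq (seq Sigma * seq Sigma)) :
  1 < #|Sigma| ->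
  all (fun uv => (size uv.1 > 0) && (size uv.2 > 0)) inst ->
  forall (P Q : proc Sigma),
    (P = Cst (cD Sigma) \/ P = Cst (cC Sigma) \/ P = Cst (cC' Sigma)) ->
    proc_wf inst Q ->
    wtau inst P (Par P Q) ->
    wtau inst (Par P Q) P.
Proof.
move=> _ _ P Q hP _ hPQ.
have [r eP hr] : exists2 r, P = Cst r & same_root r r by case: hP => [|[|]] ->; eexists.
subst P.
have hP_adm : admissible inst r (Cst r) by rewrite /admissible /= hr orbT.
have /andP [] := wtau_copies hPQ hP_adm.
rewrite /admissible /copies /= hr add1n ltnS leqn0 => /andP [_ hQ] /eqP hQ0.
have hQ_eps := all_disposable_wtau_eps (all_predU_count0 hQ hQ0).
exact: wtau_trans (wtau_parr _ hQ_eps) (wt_refl _ (cong_par0r _)).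
Qed.
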